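(* Let $K$ be a field of characteristic $0$, let $E$ be a subfield of $K$, let $f,g\in K[X]$ have degree greater than one, and let $x_0,y_0\in K$. Assume that $(f,x_0)$ and $(g,y_0)$ are both isotrivial over $E$, and that $\mathcal{O}_f(x_0)\cap\mathcal{O}_g(y_0)$ is infinite. Then there exists a single linear $\mu\in\overline{K}[X]$ such that $\mu\circ f\circ\mu^{\circ(-1)}\in\overline{E}[X]$, $\mu\circ g\circ\mu^{\circ(-1)}\in\overline{E}[X]$, $\mu(x_0)\in\overline{E}$ and $\mu(y_0)\in\overline{E}$.
   Context: $\overline K$ is an algebraic closure of $K$ and $\overline E$ is the algebraic closure of $E$ inside $\overline K$. A linear polynomial has degree exactly $1$ and $\mu^{\circ(-1)}$ is its compositional inverse. For $\phi\in K[X]$ and $z\in K$, the pair $(\phi,z)$ is isotrivial over $E$ if there exists a linear $\ell\in\overline K[X]$ with $\ell\circ\phi\circ\ell^{\circ(-1)}\in\overline E[X]$ and $\ell(z)\in\overline E$. $\mathcal{O}_f(x_0)=\{f^{\circ n}(x_0):n\ge0\}$, where $f^{\circ n}$ is the $n$-th iterate. *)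

From HB Require Import structures.
From mathcomp Require Import all_boot all_order all_algebra.
Set Implicit Arguments. Unset Strict Implicit. Unset Printing Implicit Defensive.
Import GRing.Theory.
Local Open Scope ring_scope.

Definition linear_poly (L : fieldType) (l : {poly L}) : Prop := size l = 2%N.

(* Compositional inverse of a linear polynomial l = a X + b, namely a^-1 (X - b). *)
Definition lin_inv (L : fieldType) (l : {poly L}) : {poly L} :=
  (lead_coef l)^-1 *: ('X - (l`_0)%:P).

(* Conjugate l o phi o l^{o(-1)} (p \Po q is p o q in mathcomp). *)
Definition lconj (L : fieldType) (l phi : {poly L}) : {poly L} :=
  l \Po (phi \Po lin_inv l).

(* Algebraic closure of E inside L, where E embeds in L via e : E -> L. *)
Definition algclos_in (E L : fieldType) (e : E -> L) (z : L) : Prop :=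
  exists p : {poly E}, p != 0 /\ root (map_poly e p) z.

Definition poly_in (L : fieldType) (P : L -> Prop) (p : {poly L}) : Prop :=
  forall i, P p`_i.

Definition poly_orbit (K : fieldType) (f : {poly K}) (x0 z : K) : Prop :=
  exists n : nat, z = iter n (fun x => f.[x]) x0.

(* Isotriviality of (phi, z) over E, with Kbar = L via iota : K -> L and
   E embedded in K via j : E -> K. *)
Definition isotrivial (E K L : fieldType) (j : {rmorphism E -> K})
  (iota : {rmorphism K -> L}) (phi : {poly K}) (z : K) : Prop :=
  exists l : {poly L}, linear_poly l /\
    poly_in (algclos_in (iota \o j)) (lconj l (map_poly iota phi)) /\
    algclos_in (iota \o j) l.[iota z].

From HB Require Import structures.
From mathcomp Require Import all_boot all_order all_algebra.
From Stdlib Require Import Classical.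
Set Implicit Arguments. Unset Strict Implicit. Unset Printing Implicit Defensive.
Import GRing.Theory.
Local Open Scope ring_scope.

(* Let l1, l2 be the linear maps witnessing the isotriviality of
   (f, x0) and (g, y0).  A linear conjugacy carries orbits to orbits, so l1
   (resp. l2) sends the whole orbit of x0 (resp. y0) into Ebar.  Since the
   two orbits share infinitely many points, they share two distinct points
   z1 != z2; both l1 and l2 take values in Ebar at z1 and z2.  The linear
   map c := l1 o l2^{-1} then sends the two distinct points l2(z1), l2(z2)
   of Ebar into Ebar, hence (by interpolation) has coefficients in Ebar, and
   so does its inverse.  Therefore mu := l1 = c o l2 works for both pairs:
   l1 o g o l1^{-1} = c o (l2 o g o l2^{-1}) o c^{-1} and l1(y0) = c(l2(y0)). *)

Section AlgebraicSubfield.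
Variables (E L : fieldType) (e : {rmorphism E -> L}).
Local Notation A := (algclos_in e).

Lemma algclos_inE z : A z <-> algebraicOver e z.
Proof. by split => [[p [p_nz pz]]|[p p_nz pz]]; exists p. Qed.

Lemma algclos_in0 : A 0. Proof. exact/algclos_inE/algebraic0. Qed.
Lemma algclos_in1 : A 1. Proof. exact/algclos_inE/algebraic1. Qed.

Lemma algclos_inD x y : A x -> A y -> A (x + y).
Proof. by move=> /algclos_inE Ax /algclos_inE Ay; apply/algclos_inE/algebraic_add. Qed.

Lemma algclos_inN x : A x -> A (- x).
Proof. by move=> /algclos_inE Ax; apply/algclos_inE/algebraic_opp. Qed.

Lemma algclos_inB x y : A x -> A y -> A (x - y).
Proof. by move=> Ax Ay; apply/algclos_inD/algclos_inN. Qed.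

Lemma algclos_inM x y : A x -> A y -> A (x * y).
Proof. by move=> /algclos_inE Ax /algclos_inE Ay; apply/algclos_inE/algebraic_mul. Qed.

Lemma algclos_inV x : A x -> A x^-1.
Proof. by move=> /algclos_inE Ax; apply/algclos_inE/algebraic_inv. Qed.

Lemma algclos_inX x n : A x -> A (x ^+ n).
Proof.
move=> Ax; elim: n => [|n IHn]; first by rewrite expr0; apply: algclos_in1.
by rewrite exprS; apply: algclos_inM.
Qed.

Lemma algclos_in_sum (I : Type) (r : seq I) (P : pred I) (F : I -> L) :
  (forall i, P i -> A (F i)) -> A (\sum_(i <- r | P i) F i).
Proof.
move=> AF; elim/big_rec: _ => [|i x Pi Ax]; first exact: algclos_in0.
by apply: algclos_inD => //; apply: AF.
Qed.

Lemma poly_inC a : A a -> poly_in A a%:P.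
Proof. by move=> Aa i; rewrite coefC; case: ifP => _ //; apply: algclos_in0. Qed.

Lemma poly_inX : poly_in A 'X.
Proof. by move=> i; rewrite coefX; case: (i == 1%N); [apply: algclos_in1 | apply: algclos_in0]. Qed.

Lemma poly_inD p q : poly_in A p -> poly_in A q -> poly_in A (p + q).
Proof. by move=> Ap Aq i; rewrite coefD; apply: algclos_inD. Qed.

Lemma poly_inB p q : poly_in A p -> poly_in A q -> poly_in A (p - q).
Proof. by move=> Ap Aq i; rewrite coefB; apply: algclos_inB. Qed.

Lemma poly_inZ a p : A a -> poly_in A p -> poly_in A (a *: p).
Proof. by move=> Aa Ap i; rewrite coefZ; apply: algclos_inM. Qed.

Lemma poly_inM p q : poly_in A p -> poly_in A q -> poly_in A (p * q).
Proof. by move=> Ap Aq i; rewrite coefM; apply: algclos_in_sum => k _; apply: algclos_inM. Qed.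

Lemma poly_inXn p n : poly_in A p -> poly_in A (p ^+ n).
Proof.
move=> Ap; elim: n => [|n IHn]; last by rewrite exprS; apply: poly_inM.
by rewrite expr0 -polyC1; apply/poly_inC/algclos_in1.
Qed.

Lemma poly_in_comp p q : poly_in A p -> poly_in A q -> poly_in A (p \Po q).
Proof.
move=> Ap Aq i; rewrite comp_polyE coef_sum; apply: algclos_in_sum => k _.
by rewrite coefZ; apply/algclos_inM/poly_inXn.
Qed.

Lemma poly_in_horner p x : poly_in A p -> A x -> A p.[x].
Proof.
move=> Ap Ax; rewrite horner_coef; apply: algclos_in_sum => i _.
exact/algclos_inM/algclos_inX.
Qed.

End AlgebraicSubfield.

Section LinearPolynomials.
Variable L : fieldType.
Implicit Types (l c p q : {poly L}) (x : L).

Lemma linear_polyE l : linear_poly l -> l = l`_1 *: 'X + (l`_0)%:P.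
Proof.
move=> l_lin; apply/polyP => i; rewrite coefD coefZ coefX coefC.
case: i => [|[|i]] /=; rewrite ?mulr0 ?mulr1 ?add0r ?addr0 //.
by rewrite nth_default // l_lin.
Qed.

Lemma linear_lead l : linear_poly l -> lead_coef l = l`_1.
Proof. by move=> l_lin; rewrite lead_coefE l_lin. Qed.

Lemma linear_lead_neq0 l : linear_poly l -> l`_1 != 0.
Proof. by move=> l_lin; rewrite -linear_lead // lead_coef_eq0 -size_poly_eq0 l_lin. Qed.

Lemma linear_hornerE l x : linear_poly l -> l.[x] = l`_1 * x + l`_0.
Proof. by move=> l_lin; rewrite {1}(linear_polyE l_lin) hornerD hornerZ hornerX hornerC. Qed.

Lemma linear_lin_inv l : linear_poly l -> linear_poly (lin_inv l).
Proof.
move=> l_lin; rewrite /linear_poly /lin_inv size_scale ?size_XsubC //.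
by rewrite invr_eq0 linear_lead // linear_lead_neq0.
Qed.

Lemma lin_invK l : linear_poly l -> l \Po lin_inv l = 'X.
Proof.
move=> l_lin; rewrite {2}(linear_polyE l_lin) comp_polyD comp_polyZ comp_polyX.
rewrite comp_polyC /lin_inv linear_lead // scalerA mulfV ?linear_lead_neq0 //.
by rewrite scale1r subrK.
Qed.

Lemma lin_invKV l : linear_poly l -> lin_inv l \Po l = 'X.
Proof.
move=> l_lin; rewrite /lin_inv comp_polyZ comp_polyB comp_polyX comp_polyC.
rewrite linear_lead // {2}(linear_polyE l_lin) addrK scalerA.
by rewrite mulVf ?linear_lead_neq0 // scale1r.
Qed.

Lemma linear_comp_inj l p q : linear_poly l -> l \Po p = l \Po q -> p = q.
Proof.
move=> l_lin /(congr1 (fun r : {poly L} => lin_inv l \Po r)).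
by rewrite !comp_polyA lin_invKV // !comp_polyX.
Qed.

Lemma linear_horner_inj l x y : linear_poly l -> l.[x] = l.[y] -> x = y.
Proof.
move=> l_lin /(congr1 (horner (lin_inv l))).
by rewrite -!horner_comp lin_invKV // !hornerX.
Qed.

Lemma linear_comp c l : linear_poly c -> linear_poly l -> linear_poly (c \Po l).
Proof. by move=> c_lin l_lin; rewrite /linear_poly size_comp_poly2. Qed.

Lemma lconj_horner l p x : linear_poly l -> (lconj l p).[l.[x]] = l.[p.[x]].
Proof.
by move=> l_lin; rewrite /lconj !horner_comp -[(lin_inv l).[_]]horner_comp lin_invKV // hornerX.
Qed.

Lemma lconj_comp c l p : linear_poly c -> linear_poly l ->
  lconj (c \Po l) p = lconj c (lconj l p).
Proof.
move=> c_lin l_lin; have cl_lin : linear_poly (c \Po l) by apply: linear_comp.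
have inv_comp : lin_inv (c \Po l) = lin_inv l \Po lin_inv c.
  apply: (linear_comp_inj cl_lin).
  rewrite lin_invK // -comp_polyA (comp_polyA l) lin_invK //.
  by rewrite comp_polyX lin_invK.
by rewrite /lconj inv_comp !comp_polyA.
Qed.

End LinearPolynomials.

Section LinearOverAlgebraic.
Variables (E L : fieldType) (e : {rmorphism E -> L}).
Local Notation A := (algclos_in e).
Implicit Types (c l p : {poly L}).

Lemma poly_in_lin_inv c : linear_poly c -> poly_in A c -> poly_in A (lin_inv c).
Proof.
move=> c_lin Ac; rewrite /lin_inv; apply: poly_inZ.
  by rewrite lead_coefE; apply/algclos_inV/Ac.
exact/poly_inB/poly_inC/Ac/poly_inX.
Qed.

Lemma poly_in_lconj c p : linear_poly c -> poly_in A c -> poly_in A p ->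
  poly_in A (lconj c p).
Proof.
move=> c_lin Ac Ap; rewrite /lconj.
by apply: poly_in_comp => //; apply: poly_in_comp => //; apply: poly_in_lin_inv.
Qed.

Lemma linear_interpolation c v1 v2 : linear_poly c -> v1 != v2 ->
  A v1 -> A v2 -> A c.[v1] -> A c.[v2] -> poly_in A c.
Proof.
move=> c_lin v12 Av1 Av2 Acv1 Acv2.
have slope : c`_1 = (c.[v1] - c.[v2]) / (v1 - v2).
  rewrite !linear_hornerE // opprD addrACA subrr addr0 -mulrBr mulfK //.
  by rewrite subr_eq0.
have A1 : A c`_1.
  by rewrite slope; apply: algclos_inM; [apply: algclos_inB | apply/algclos_inV/algclos_inB].
have A0 : A c`_0.
  have -> : c`_0 = c.[v1] - c`_1 * v1 by rewrite linear_hornerE // addrC addKr.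
  exact/algclos_inB/algclos_inM.
rewrite (linear_polyE c_lin).
exact/poly_inD/poly_inC/A0/poly_inZ/poly_inX.
Qed.

Lemma linear_transition l1 l2 u1 u2 :
  linear_poly l1 -> linear_poly l2 -> u1 != u2 ->
  A l1.[u1] -> A l1.[u2] -> A l2.[u1] -> A l2.[u2] ->
  exists c, [/\ linear_poly c, poly_in A c & l1 = c \Po l2].
Proof.
move=> l1_lin l2_lin u12 A1u1 A1u2 A2u1 A2u2.
have c_lin : linear_poly (l1 \Po lin_inv l2).
  exact/linear_comp/linear_lin_inv.
have l1E : l1 = (l1 \Po lin_inv l2) \Po l2.
  by rewrite -comp_polyA lin_invKV // comp_polyXr.
exists (l1 \Po lin_inv l2); split => //.
have cE u : (l1 \Po lin_inv l2).[l2.[u]] = l1.[u] by rewrite -horner_comp -l1E.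
apply: (linear_interpolation (v1 := l2.[u1]) (v2 := l2.[u2])); rewrite ?cE //.
by apply: contra u12 => /eqP /linear_horner_inj ->.
Qed.

End LinearOverAlgebraic.

Lemma isotrivial_orbit (E K L : fieldType) (j : {rmorphism E -> K})
    (iota : {rmorphism K -> L}) (f : {poly K}) (l : {poly L}) (x0 z : K) :
  linear_poly l -> poly_in (algclos_in (iota \o j)) (lconj l (map_poly iota f)) ->
  algclos_in (iota \o j) l.[iota x0] -> poly_orbit f x0 z ->
  algclos_in (iota \o j) l.[iota z].
Proof.
move=> l_lin Af Ax0 [n ->]; elim: n => [|n IHn] //=.
by rewrite -horner_map -lconj_horner //; apply: poly_in_horner.
Qed.

Lemma infinite_two_points (T : eqType) (P : T -> Prop) :
  ~ (exists s : seq T, forall z, P z -> z \in s) ->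
  exists z1 z2, [/\ P z1, P z2 & z1 != z2].
Proof.
move=> infP; apply: NNPP => no_pair; apply: infP.
have [[z1 Pz1]|no_point] := classic (exists z, P z); last first.
  by exists [::] => z Pz; case: no_point; exists z.
exists [:: z1] => z Pz; rewrite inE; apply/eqP; apply: NNPP => z_neq_z1.
by apply: no_pair; exists z, z1; split => //; apply/eqP.
Qed.

Theorem mainTheorem14
  (K : fieldType) (E : fieldType) (j : {rmorphism E -> K})
  (L : closedFieldType) (iota : {rmorphism K -> L})
  (Lalg : forall z : L, exists p : {poly K}, p != 0 /\ root (map_poly iota p) z)
  (char0 : [pchar K] =i pred0)
  (f g : {poly K}) (x0 y0 : K)
  (hf : (2 < size f)%N) (hg : (2 < size g)%N)
  (isof : isotrivial j iota f x0) (isog : isotrivial j iota g y0)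
  (hinf : ~ exists s : seq K,
            forall z : K, poly_orbit f x0 z -> poly_orbit g y0 z -> z \in s) :
  exists mu : {poly L}, linear_poly mu /\
    poly_in (algclos_in (iota \o j)) (lconj mu (map_poly iota f)) /\
    poly_in (algclos_in (iota \o j)) (lconj mu (map_poly iota g)) /\
    algclos_in (iota \o j) mu.[iota x0] /\
    algclos_in (iota \o j) mu.[iota y0].
Proof.
move: isof isog => [l1 [l1_lin [Af Ax0]]] [l2 [l2_lin [Ag Ay0]]].
have [z1 [z2 [[z1f z1g] [z2f z2g] z12]]] :
    exists z1 z2, [/\ poly_orbit f x0 z1 /\ poly_orbit g y0 z1,
                      poly_orbit f x0 z2 /\ poly_orbit g y0 z2 & z1 != z2].
  by apply: infinite_two_points => -[s hs]; apply: hinf; exists s => z zf zg; apply: hs.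
have [c [c_lin Ac l1E]] : exists c : {poly L}, [/\ linear_poly c,
    poly_in (algclos_in (iota \o j)) c & l1 = c \Po l2].
  apply: (@linear_transition _ _ (iota \o j) l1 l2 (iota z1) (iota z2)) => //.
  - by rewrite (inj_eq (fmorph_inj iota)).
  - exact: (isotrivial_orbit l1_lin Af Ax0 z1f).
  - exact: (isotrivial_orbit l1_lin Af Ax0 z2f).
  - exact: (isotrivial_orbit l2_lin Ag Ay0 z1g).
  - exact: (isotrivial_orbit l2_lin Ag Ay0 z2g).
exists l1; do !split => //.
  by rewrite l1E lconj_comp //; apply: poly_in_lconj.
by rewrite l1E horner_comp; apply: poly_in_horner.
Qed.
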